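(* Let $G$ be a simple, undirected, connected graph on $N$ vertices with degree sequence $d_1\le d_2\le\cdots\le d_N$, and let $H=\sum_{1\le i<j\le N}\frac{d_j}{d_i}$. Then $$R^+(G)\ge N(N-3)+H+\left[\frac{N(N-1)}{2}\right]^2\frac{1}{H}.$$
   Context: For vertices $i,j$ of $G$, $R_{ij}$ denotes the effective resistance between $i$ and $j$ when every edge of $G$ is a unit resistor. The additive degree-Kirchhoff index is $R^+(G)=\sum_{i<j}(d_i+d_j)R_{ij}$, where $d_i$ is the degree of vertex $i$. *)

From HB Require Import structures.
From mathcomp Require Import all_boot all_order all_algebra.
Set Implicit Arguments. Unset Strict Implicit. Unset Printing Implicit Defensive.
Import Order.TTheory GRing.Theory Num.Theory.
Local Open Scope ring_scope.

Definition simple_graph (n : nat) (e : rel 'I_n) : Prop :=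
  symmetric e /\ irreflexive e.

Definition connected_graph (n : nat) (e : rel 'I_n) : Prop :=
  forall x y : 'I_n, connect e x y.

Definition deg (n : nat) (e : rel 'I_n) (i : 'I_n) : nat :=
  #|[set j | e i j]|.

Definition laplacian (R : realFieldType) (n : nat) (e : rel 'I_n) : 'M[R]_n :=
  \matrix_(i, j) (if i == j then (deg e i)%:R
                  else if e i j then -1 else 0).

(* Effective resistance between i and j (all edges unit resistors):
   inject unit current at i, extract it at j; a potential vector x solves
   x L = e_i - e_j (L symmetric), obtained via the library partial inverse
   pinvmx (valid since e_i - e_j lies in the row space of L for a connected
   graph); R_ij is the potential difference x_i - x_j. *)
Definition eff_res (R : realFieldType) (n : nat) (e : rel 'I_n) (i j : 'I_n) : R :=
  let u : 'rV[R]_n := delta_mx 0 i - delta_mx 0 j in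
  let x := u *m pinvmx (laplacian R e) in
  x 0 i - x 0 j.

Definition add_deg_kirchhoff (R : realFieldType) (n : nat) (e : rel 'I_n) : R :=
  \sum_(i < n) \sum_(j < n | (i < j)%N)
     ((deg e i)%:R + (deg e j)%:R) * eff_res R e i j.

Definition Hsum (R : realFieldType) (n : nat) (e : rel 'I_n) : R :=
  \sum_(i < n) \sum_(j < n | (i < j)%N) (deg e j)%:R / (deg e i)%:R.

From HB Require Import structures.
From mathcomp Require Import all_boot all_order all_algebra.
From mathcomp Require Import ring lra zify.
Set Implicit Arguments. Unset Strict Implicit. Unset Printing Implicit Defensive.
Import Order.TTheory GRing.Theory Num.Theory.
Local Open Scope ring_scope.

(* The Dirichlet energy is nonnegative, so E(x - y) >= 0 for the unit
   potential x between i and j and the trial potential y = e_i/d_i - e_j/d_j;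
   expanding with Green's identity gives
   R_ij >= 1/d_i + 1/d_j - 2 a_ij / (d_i d_j).  Weighting by d_i + d_j and
   summing over pairs gives R^+ >= N(N-1) + H + K - 2N with
   K = sum_{i<j} d_i/d_j, because the edge terms 2 a_ij (1/d_i + 1/d_j) add up
   to 2N; finally H K >= (N(N-1)/2)^2 by Cauchy-Schwarz. *)

Lemma sum_delta_mul (R : pzSemiRingType) (T : finType) (i : T) (h : T -> R) :
  \sum_a (a == i)%:R * h a = h i.
Proof.
rewrite (bigD1 i) //= eqxx mul1r big1 ?addr0 // => a /negbTE ->.
by rewrite mul0r.
Qed.

Lemma sum_dipole_mul (R : pzRingType) (T : finType) (i j : T) (al be : R)
    (h : T -> R) :
  \sum_a (al * (a == i)%:R - be * (a == j)%:R) * h a = al * h i - be * h j.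
Proof.
under eq_bigr do rewrite mulrBl -!mulrA.
by rewrite sumrB -!mulr_sumr !sum_delta_mul.
Qed.

Lemma sum_lt_sym (V : zmodType) (n : nat) (f : 'I_n -> 'I_n -> V) :
  (forall i j, f i j = f j i) ->
  (\sum_(i < n) \sum_(j < n | (i < j)%N) f i j) *+ 2 =
  \sum_(i < n) \sum_(j < n) f i j - \sum_(i < n) f i i.
Proof.
move=> fC.
have split_row i : \sum_(j < n) f i j =
    \sum_(j < n | (i < j)%N) f i j + f i i + \sum_(j < n | (j < i)%N) f i j.
  rewrite (bigID (fun j : 'I_n => (i < j)%N)) /= -addrA; congr (_ + _).
  rewrite (bigD1 i) /= ?ltnn //; congr (_ + _); apply: eq_bigl => j.
  by rewrite -val_eqE /=; lia.
have lower_upper : \sum_(i < n) \sum_(j < n | (j < i)%N) f i j =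
    \sum_(i < n) \sum_(j < n | (i < j)%N) f i j.
  rewrite (exchange_big_dep xpredT) //=; apply: eq_bigr => j _.
  by apply: eq_bigr => i _; rewrite fC.
under [X in _ = X - _]eq_bigr do rewrite split_row.
by rewrite !big_split /= lower_upper addrAC addrK mulr2n.
Qed.

Lemma sum_lt_pairs1 (R : pzRingType) (n : nat) :
  (\sum_(i < n) \sum_(j < n | (i < j)%N) 1) *+ 2 = n%:R * (n%:R - 1) :> R.
Proof.
by rewrite sum_lt_sym // !sumr_const card_ord mulrBr mulr1 mulr_natr.
Qed.

Lemma sum_lt_pairs_le1 (V : nmodType) (n : nat) (F : 'I_n -> 'I_n -> V) :
  (n <= 1)%N -> \sum_(i < n) \sum_(j < n | (i < j)%N) F i j = 0.
Proof.
move=> n_le1; apply: big1 => i _; apply: big1 => j lt_ij.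
by have := ltn_ord j; lia.
Qed.

Lemma sqr_sum1_le_mul_sumV (R : realFieldType) (T : finType) (P : pred T)
    (a : T -> R) :
  (forall p, P p -> 0 < a p) ->
  (\sum_(p | P p) 1) ^+ 2 <= (\sum_(p | P p) a p) * (\sum_(p | P p) (a p)^-1).
Proof.
move=> a_gt0.
rewrite expr2 mulr_suml; under eq_bigr do rewrite mul1r.
rewrite mulr_suml; under [X in _ <= X]eq_bigr do rewrite mulr_sumr.
rewrite -(@ler_pM2l _ 2) // [X in _ <= X]mulr_natl mulr2n.
rewrite [X in _ <= _ + X](exchange_big) /= -big_split /= mulr_sumr.
apply: ler_sum => p Pp; rewrite -big_split mulr_sumr /=; apply: ler_sum => q Pq.
have ap := a_gt0 p Pp; have aq := a_gt0 q Pq.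
rewrite mulr1 -subr_ge0.
have -> : a p * (a q)^-1 + a q * (a p)^-1 - 2 = (a p - a q) ^+ 2 / (a p * a q).
  by field; rewrite !gt_eqF.
by rewrite divr_ge0 ?sqr_ge0 // mulr_ge0 // ltW.
Qed.

Lemma connected_deg_gt0 (n : nat) (e : rel 'I_n) :
  connected_graph e -> forall a, (1 < n)%N -> (0 < deg e a)%N.
Proof.
move=> e_conn a n_gt1; have /card_gt0P [b] : (0 < #|predC1 a|)%N.
  by rewrite cardC1 card_ord; lia.
rewrite inE => neq_ba; have /connectP [[|c p] /=] := e_conn a b.
  by move=> _ b_eq; rewrite b_eq eqxx in neq_ba.
by case/andP=> eac _ _; apply/card_gt0P; exists c; rewrite inE.
Qed.

Section Laplacian.
Variables (R : realFieldType) (n : nat) (e : rel 'I_n).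
Hypotheses (e_sym : symmetric e) (e_irr : irreflexive e).

Definition adj (a b : 'I_n) : R := (e a b)%:R.

Definition lap (z : 'I_n -> R) (a : 'I_n) : R := \sum_b adj a b * (z a - z b).

Definition energy (z w : 'I_n -> R) : R :=
  \sum_a \sum_b adj a b * (z a - z b) * (w a - w b).

Lemma deg_sum_adj a : (deg e a)%:R = \sum_b adj a b.
Proof.
rewrite /deg -sum1_card natr_sum big_mkcond /=; apply: eq_bigr => b _.
by rewrite inE /adj; case: (e a b).
Qed.

Lemma laplacianE a b :
  laplacian R e a b = (a == b)%:R * (deg e b)%:R - adj a b.
Proof.
rewrite /laplacian mxE /adj; case: (a =P b) => [->|_].
  by rewrite e_irr mul1r subr0.
by rewrite mul0r sub0r; case: (e a b); rewrite ?oppr0.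
Qed.

Lemma mul_laplacian (z : 'rV[R]_n) a :
  (z *m laplacian R e) 0 a = lap (z 0) a.
Proof.
rewrite mxE /lap; under eq_bigr do rewrite laplacianE mulrBr.
rewrite sumrB; under eq_bigr do rewrite mulrCA.
rewrite sum_delta_mul; under [RHS]eq_bigr do rewrite mulrBr.
rewrite sumrB -mulr_suml -deg_sum_adj mulrC; congr (_ - _).
by apply: eq_bigr => b _; rewrite /adj e_sym mulrC.
Qed.

Lemma laplacian_mul_const : laplacian R e *m const_mx 1 = 0 :> 'cV_n.
Proof.
apply/matrixP => a k; rewrite !mxE.
under eq_bigr do rewrite laplacianE mxE mulr1 eq_sym.
by rewrite sumrB -deg_sum_adj sum_delta_mul subrr.
Qed.

Lemma energy_lap z w : energy z w = 2 * \sum_a w a * lap z a.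
Proof.
rewrite /energy.
under eq_bigr do under eq_bigr do rewrite mulrBr.
under eq_bigr do rewrite sumrB.
rewrite sumrB.
have -> : \sum_a \sum_b adj a b * (z a - z b) * w b = - \sum_a w a * lap z a.
  rewrite exchange_big -sumrN; apply: eq_bigr => b _.
  rewrite /lap mulr_sumr -sumrN; apply: eq_bigr => a _.
  by rewrite /adj e_sym; ring.
rewrite opprK mulr2n mulrDl mul1r; congr (_ + _).
by apply: eq_bigr => a _; rewrite /lap mulr_sumr; apply: eq_bigr => b _; ring.
Qed.

Lemma energy_term_ge0 z a b : 0 <= adj a b * (z a - z b) * (z a - z b).
Proof. by rewrite -mulrA mulr_ge0 ?ler0n // -expr2 sqr_ge0. Qed.

Lemma energy_ge0 z : 0 <= energy z z.
Proof. by do 2!apply: sumr_ge0 => ? _; apply: energy_term_ge0. Qed.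

Lemma energyBB x y :
  energy (x \- y) (x \- y) = energy x x - 2 * energy x y + energy y y.
Proof.
rewrite /energy mulr_sumr -sumrB -big_split /=; apply: eq_bigr => a _.
by rewrite mulr_sumr -sumrB -big_split /=; apply: eq_bigr => b _; ring.
Qed.

Lemma energy_eq0_edge z a b : energy z z = 0 -> e a b -> z a = z b.
Proof.
move=> z0 eab.
have row_ge0 a' : true -> 0 <= \sum_b adj a' b * (z a' - z b) * (z a' - z b).
  by move=> _; apply: sumr_ge0 => b' _; apply: energy_term_ge0.
have row_a0 := psumr_eq0P row_ge0 z0 (i := a) isT.
have := psumr_eq0P (fun b _ => energy_term_ge0 z a b) row_a0 (i := b) isT.
rewrite /adj eab mul1r -expr2 => /eqP; rewrite sqrf_eq0 subr_eq0 => /eqP.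
by apply.
Qed.

Lemma lapE z a : lap z a = (deg e a)%:R * z a - \sum_b adj a b * z b.
Proof.
rewrite /lap deg_sum_adj mulr_suml -sumrB.
by apply: eq_bigr => b _; rewrite mulrBr mulrC.
Qed.

Lemma potential_drop_ge (x : 'I_n -> R) i j :
  i != j -> (0 < deg e i)%N -> (0 < deg e j)%N ->
  (forall a, lap x a = (a == i)%:R - (a == j)%:R) ->
  (deg e i)%:R^-1 + (deg e j)%:R^-1
    - 2 * adj i j / ((deg e i)%:R * (deg e j)%:R) <= x i - x j.
Proof.
move=> neq_ij di_gt0 dj_gt0 x_lap.
set di : R := (deg e i)%:R; set dj : R := (deg e j)%:R.
have di_neq0 : di != 0 by rewrite pnatr_eq0 -lt0n.
have dj_neq0 : dj != 0 by rewrite pnatr_eq0 -lt0n.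
pose y a := di^-1 * (a == i)%:R - dj^-1 * (a == j)%:R.
have [yi yj] : y i = di^-1 /\ y j = - dj^-1.
  rewrite /y !eqxx (negbTE neq_ij) eq_sym (negbTE neq_ij).
  by rewrite !mulr1 !mulr0 subr0 sub0r.
have sum_current w : \sum_a w a * lap x a = w i - w j.
  under eq_bigr do rewrite x_lap mulrC -[(_ == i)%:R]mul1r -[(_ == j)%:R]mul1r.
  by rewrite sum_dipole_mul !mul1r.
have lap_y a :
    lap y a = (deg e a)%:R * y a - (di^-1 * adj a i - dj^-1 * adj a j).
  by rewrite lapE -sum_dipole_mul; under [X in _ - X]eq_bigr do rewrite mulrC.
have Exx : energy x x = 2 * (x i - x j) by rewrite energy_lap sum_current.
have Exy : energy x y = 2 * (di^-1 + dj^-1).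
  by rewrite energy_lap sum_current yi yj opprK.
have Eyy : energy y y = 2 * (di^-1 + dj^-1 + 2 * di^-1 * dj^-1 * adj i j).
  rewrite energy_lap sum_dipole_mul !lap_y yi yj -/di -/dj.
  rewrite /adj !e_irr (e_sym j i) -/(adj i j) !mulr0.
  by field; apply/andP.
have := energy_ge0 (x \- y); rewrite energyBB Exx Exy Eyy invfM.
lra.
Qed.

Hypothesis e_conn : connected_graph e.

Lemma connected_const (z : 'I_n -> R) :
  (forall a b, e a b -> z a = z b) -> forall a b, z a = z b.
Proof.
move=> z_edge a b; have /connectP [p] := e_conn a b.
elim: p a => [|c p IHp] a /=; first by move=> _ ->.
by case/andP=> eac pc b_last; rewrite (z_edge _ _ eac) (IHp c pc b_last).
Qed.

Lemma kermx_laplacian_sub_const :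
  (kermx (laplacian R e) <= (const_mx 1 : 'rV_n))%MS.
Proof.
apply/row_subP => k; set v := row k _.
have vL : v *m laplacian R e = 0 by rewrite /v -row_mul mulmx_ker row0.
have v_const : forall a b, v 0 a = v 0 b.
  apply: connected_const => a b; apply: energy_eq0_edge.
  rewrite energy_lap big1 ?mulr0 // => c _.
  by rewrite -(mul_laplacian v) vL !mxE mulr0.
have -> : v = v 0 k *: const_mx 1.
  by apply/rowP => a; rewrite (v_const a k) !mxE mulr1.
by rewrite scalemx_sub.
Qed.

(* The rank of the Laplacian is n - 1, so its row space is the orthogonal
   complement of the constants. *)
Lemma deltaB_sub_laplacian i j :
  ((delta_mx 0 i - delta_mx 0 j : 'rV[R]_n) <= laplacian R e)%MS.
Proof.
set L := laplacian R e; pose one : 'cV[R]_n := const_mx 1.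
have rankL : (n - 1 <= \rank L)%N.
  have := leq_trans (mxrankS kermx_laplacian_sub_const) (rank_leq_row _).
  by rewrite mxrank_ker -/L; have := rank_leq_row L; lia.
have rank_one : \rank one = 1%N.
  apply/eqP; rewrite eqn_leq rank_leq_col lt0n mxrank_eq0.
  by apply/eqP => /matrixP/(_ i 0); rewrite !mxE => /eqP; rewrite oner_eq0.
have L_ker : (L <= kermx one)%MS by apply/sub_kermxP/laplacian_mul_const.
have ker_L : (kermx one <= L)%MS.
  by rewrite -(geq_leqif (mxrank_leqif_sup L_ker)) mxrank_ker rank_one.
apply: submx_trans ker_L; apply/sub_kermxP.
by rewrite mulmxBl -!rowE /one !row_const subrr.
Qed.

Lemma eff_res_ge i j :
  i != j -> (0 < deg e i)%N -> (0 < deg e j)%N ->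
  (deg e i)%:R^-1 + (deg e j)%:R^-1
    - 2 * adj i j / ((deg e i)%:R * (deg e j)%:R) <= eff_res R e i j.
Proof.
move=> neq_ij di_gt0 dj_gt0; rewrite /eff_res /=.
set u := (delta_mx 0 i - delta_mx 0 j : 'rV[R]_n).
have potential : u *m pinvmx (laplacian R e) *m laplacian R e = u.
  exact/mulmxKpV/deltaB_sub_laplacian.
apply: potential_drop_ge => // a.
by rewrite -mul_laplacian potential !mxE eqxx.
Qed.

End Laplacian.

Section DegreeSums.
Variables (R : realFieldType) (n : nat) (e : rel 'I_n).
Hypotheses (e_sym : symmetric e) (e_irr : irreflexive e).
Hypothesis deg_gt0 : forall a, (0 < deg e a)%N.

Lemma sum_adj_invdeg : \sum_i \sum_j adj R e i j / (deg e i)%:R = n%:R.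
Proof.
under eq_bigr do
  rewrite -mulr_suml -deg_sum_adj mulfV ?pnatr_eq0 -?lt0n ?deg_gt0 //.
by rewrite sumr_const card_ord.
Qed.

Lemma sum_edges_invdeg :
  \sum_(i < n) \sum_(j < n | (i < j)%N)
    adj R e i j * ((deg e i)%:R^-1 + (deg e j)%:R^-1) = n%:R.
Proof.
suff: (\sum_(i < n) \sum_(j < n | (i < j)%N)
    adj R e i j * ((deg e i)%:R^-1 + (deg e j)%:R^-1)) *+ 2 = n%:R *+ 2.
  by move/eqP; rewrite eqrMn2r => /eqP.
rewrite sum_lt_sym; last first.
  by move=> i j; rewrite /adj e_sym addrC.
rewrite [X in _ - X]big1 ?subr0; last by move=> i _; rewrite /adj e_irr mul0r.
under eq_bigr do under eq_bigr do rewrite mulrDr.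
under eq_bigr do rewrite big_split.
rewrite big_split /= sum_adj_invdeg [X in _ + X]exchange_big /= mulr2n.
congr (_ + _); rewrite -[RHS]sum_adj_invdeg.
by apply: eq_bigr => i _; apply: eq_bigr => j _; rewrite /adj e_sym.
Qed.

Lemma add_deg_kirchhoff_ge : connected_graph e ->
  n%:R * (n%:R - 3) + Hsum R e
    + \sum_(i < n) \sum_(j < n | (i < j)%N) (deg e i)%:R / (deg e j)%:R
  <= add_deg_kirchhoff R e.
Proof.
move=> e_conn; pose d a : R := (deg e a)%:R.
have d_neq0 a : d a != 0 by rewrite pnatr_eq0 -lt0n.
pose bound i j := (d i)^-1 + (d j)^-1 - 2 * adj R e i j / (d i * d j).
have bound_le (i j : 'I_n) : (i < j)%N ->
    (d i + d j) * bound i j <= (d i + d j) * eff_res R e i j.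
  move=> lt_ij; rewrite ler_wpM2l ?addr_ge0 ?ler0n //.
  by apply: eff_res_ge; rewrite -?val_eqE ?neq_ltn ?lt_ij.
have sum_le : \sum_(i < n) \sum_(j < n | (i < j)%N) (d i + d j) * bound i j
    <= add_deg_kirchhoff R e.
  by apply: ler_sum => i _; apply: ler_sum => j; apply: bound_le.
apply: le_trans sum_le.
have -> : \sum_(i < n) \sum_(j < n | (i < j)%N) (d i + d j) * bound i j =
    (\sum_(i < n) \sum_(j < n | (i < j)%N) 1) *+ 2 + Hsum R e
    + \sum_(i < n) \sum_(j < n | (i < j)%N) d i / d j
    - (\sum_(i < n) \sum_(j < n | (i < j)%N)
         adj R e i j * ((d i)^-1 + (d j)^-1)) *+ 2.
  rewrite /Hsum -!sumrMnl -!big_split /= -sumrB; apply: eq_bigr => i _.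
  rewrite -!sumrMnl -!big_split /= -sumrB; apply: eq_bigr => j _.
  by rewrite /bound /d; field; rewrite -!/(d _) !d_neq0.
by rewrite sum_lt_pairs1 sum_edges_invdeg; lra.
Qed.

Lemma sqr_npairs_le_Hsum_mul :
  (n%:R * (n%:R - 1) / 2) ^+ 2
    <= Hsum R e
       * \sum_(i < n) \sum_(j < n | (i < j)%N) (deg e i)%:R / (deg e j)%:R.
Proof.
have d_gt0 a : 0 < (deg e a)%:R :> R by rewrite ltr0n.
have -> : n%:R * (n%:R - 1) / 2 = \sum_(i < n) \sum_(j < n | (i < j)%N) 1 :> R.
  by rewrite -sum_lt_pairs1 -mulr_natr mulfK ?pnatr_eq0.
rewrite /Hsum !pair_big_dep /=.
under [X in _ * X]eq_bigr do rewrite -invf_div.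
by apply: sqr_sum1_le_mul_sumV => p _; rewrite divr_gt0.
Qed.

End DegreeSums.

Theorem theorem4 (R : realFieldType) (n : nat) (e : rel 'I_n) :
  simple_graph e -> connected_graph e ->
  (forall i j : 'I_n, (i <= j)%N -> (deg e i <= deg e j)%N) ->
  add_deg_kirchhoff R e >=
    n%:R * (n%:R - 3) + Hsum R e
    + ((n%:R * (n%:R - 1) / 2) ^+ 2) / Hsum R e.
Proof.
move=> [e_sym e_irr] e_conn _.
have [n_le1|n_gt1] := leqP n 1.
  rewrite /add_deg_kirchhoff /Hsum !sum_lt_pairs_le1 // invr0 mulr0 !addr0.
  have : n%:R <= 1%:R :> R by rewrite ler_nat.
  by have := ler0n R n; nra.
have deg_gt0 a := connected_deg_gt0 e_conn a n_gt1.
have := add_deg_kirchhoff_ge R e_sym e_irr deg_gt0 e_conn.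
have := sqr_npairs_le_Hsum_mul R deg_gt0.
set H := Hsum R e; set K := \sum_(i < n) \sum_(j < n | _) _ => HK_ge RHS_le.
apply: le_trans RHS_le; rewrite lerD2l.
have K_ge0 : 0 <= K by do 2!apply: sumr_ge0 => ? _; rewrite divr_ge0.
have H_ge0 : 0 <= H by do 2!apply: sumr_ge0 => ? _; rewrite divr_ge0.
have [->|H_neq0] := eqVneq H 0; first by rewrite invr0 mulr0.
have H_gt0 : 0 < H by rewrite lt_def H_neq0.
by rewrite ler_pdivrMr // [K * H]mulrC.
Qed.
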